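(* Let $\epsilon\ge0$ and let $\mathcal A\in\mathrm{LDP}_\epsilon$. Then \[ \eta_{\mathrm{Tr}}(\mathcal A)\le\frac{e^\epsilon-1}{e^\epsilon+1}. \]
   Context: All Hilbert spaces are finite-dimensional. $E_\gamma(\rho\|\sigma)=\mathrm{Tr}(\rho-\gamma\sigma)_+$. A quantum channel (CPTP map) $\mathcal A$ from operators on $H_A$ to operators on $H_B$ is in $\mathrm{LDP}_\epsilon$ if $E_{e^\epsilon}(\mathcal A(\rho)\|\mathcal A(\sigma))=0$ for all states $\rho,\sigma$ on $H_A$. The trace-distance contraction coefficient is $\eta_{\mathrm{Tr}}(\mathcal A)=\sup_{\rho\ne\sigma}\frac{\|\mathcal A(\rho)-\mathcal A(\sigma)\|_1}{\|\rho-\sigma\|_1}$, the supremum over distinct states on $H_A$. *)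

From HB Require Import structures.
From mathcomp Require Import all_boot all_order all_algebra.
From mathcomp Require Import spectral.
From mathcomp Require Import classical_sets reals.
From mathcomp Require Import sequences exp.
From mathcomp.real_closed Require Import complex mxtens.

Set Implicit Arguments.
Unset Strict Implicit.
Unset Printing Implicit Defensive.

Import Order.TTheory GRing.Theory Num.Theory.
Local Open Scope ring_scope.

Section Quantum.
Variable R : realType.
Local Notation C := (R[i]).

Definition adjmx p q (M : 'M[C]_(p, q)) : 'M[C]_(q, p) := (map_mx Num.conj M)^T.

Definition psdmx n (X : 'M[C]_n) : Prop :=
  forall v : 'rV[C]_n, 0 <= (v *m X *m adjmx v) 0 0.

Definition is_state n (rho : 'M[C]_n) : Prop := psdmx rho /\ \tr rho = 1.

(* operators on C^k (x) C^n are k*n square matrices; block (i,j) of X *)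
Definition blockmx k n (X : 'M[C]_(k * n)) (i j : 'I_k) : 'M[C]_n :=
  \matrix_(a, b) X (mxtens_index (i, a)) (mxtens_index (j, b)).

(* the amplification id_k (x) A *)
Definition ampl k n m (A : 'M[C]_n -> 'M[C]_m) (X : 'M[C]_(k * n)) : 'M[C]_(k * m) :=
  \matrix_(p, q) A (blockmx X (mxtens_unindex p).1 (mxtens_unindex q).1)
                   (mxtens_unindex p).2 (mxtens_unindex q).2.

Definition is_channel n m (A : 'M[C]_n -> 'M[C]_m) : Prop :=
  [/\ (forall (a : C) (X Y : 'M[C]_n), A (a *: X + Y) = a *: A X + A Y),
      (forall (k : nat) (X : 'M[C]_(k * n)), psdmx X -> psdmx (ampl A X)) &
      (forall X : 'M[C]_n, \tr (A X) = \tr X)].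

(* eigenvalues (with multiplicity) of a normal matrix, via the spectral theorem
   X = U^-1 diag(spectral_diag X) U *)
Definition eigvals n (X : 'M[C]_n) : 'rV[C]_n := spectral_diag X.

Definition trpos n (X : 'M[C]_n) : R :=
  \sum_(i < n) Num.max (complex.Re (eigvals X 0 i)) 0.

Definition trnorm n (X : 'M[C]_n) : R :=
  \sum_(i < n) Num.sqrt (complex.Re (eigvals (adjmx X *m X) 0 i)).

Definition Egamma n (gamma : R) (rho sigma : 'M[C]_n) : R :=
  trpos (rho - (gamma%:C)%C *: sigma).

Definition is_LDP n m (eps : R) (A : 'M[C]_n -> 'M[C]_m) : Prop :=
  forall rho sigma : 'M[C]_n, is_state rho -> is_state sigma ->
    Egamma (expR eps) (A rho) (A sigma) = 0.

Definition eta_tr n m (A : 'M[C]_n -> 'M[C]_m) : R :=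
  sup [set r : R | exists rho sigma : 'M[C]_n,
        [/\ is_state rho, is_state sigma, rho <> sigma &
            r = trnorm (A rho - A sigma) / trnorm (rho - sigma)]].

End Quantum.

(* Write rho - sigma = t (w1 - w2) with states w1, w2 and t = Tr (rho - sigma)_+ (Jordan
   decomposition), so that ||rho - sigma||_1 = 2 t.  As A preserves the trace,
   ||A rho - A sigma||_1 = 2 Tr (A (rho - sigma))_+ = 2 t Tr Pi (A w1 - A w2), where Pi
   projects onto the positive eigenspace of A (rho - sigma).  A Hermitian X with
   Tr X_+ = 0 has Tr M X <= 0 for every M >= 0; applied to the vanishing hockey-stick
   divergences of (A w1, A w2) and (A w2, A w1), tested against Pi and 1 - Pi, this gives
   a <= e^eps b and 1 - b <= e^eps (1 - a) for a = Tr Pi A w1, b = Tr Pi A w2, whence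
   a - b <= (e^eps - 1) / (e^eps + 1). *)

From mathcomp Require Import all_boot all_order all_algebra sesquilinear spectral.
From mathcomp Require Import boolp classical_sets reals sequences exp ring lra.
From mathcomp.real_closed Require Import complex mxtens.

Set Implicit Arguments.
Unset Strict Implicit.
Unset Printing Implicit Defensive.

Import Order.TTheory GRing.Theory Num.Theory.
Local Open Scope ring_scope.

Section QuantumChannels.
Variable R : realType.
Local Notation C := R[i].

Lemma adjmxE p q (M : 'M[C]_(p, q)) : adjmx M = (M ^t*)%sesqui.
Proof. by rewrite /adjmx map_trmx. Qed.

Lemma adjmxK p q (M : 'M[C]_(p, q)) : adjmx (adjmx M) = M.
Proof. by apply/matrixP => i j; rewrite !mxE conjCK. Qed.

Lemma adjmxM p q r (M : 'M[C]_(p, q)) (N : 'M[C]_(q, r)) :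
  adjmx (M *m N) = adjmx N *m adjmx M.
Proof. by rewrite /adjmx map_mxM trmx_mul. Qed.

Lemma adjmxD p q (M N : 'M[C]_(p, q)) : adjmx (M + N) = adjmx M + adjmx N.
Proof. by apply/matrixP => i j; rewrite !mxE rmorphD. Qed.

Lemma adjmxB p q (M N : 'M[C]_(p, q)) : adjmx (M - N) = adjmx M - adjmx N.
Proof. by apply/matrixP => i j; rewrite !mxE rmorphB. Qed.

Lemma adjmxZ p q a (M : 'M[C]_(p, q)) : adjmx (a *: M) = a^* *: adjmx M.
Proof. by apply/matrixP => i j; rewrite !mxE rmorphM. Qed.

Lemma Re_realM (c : R) (z : C) : complex.Re (c%:C%C * z) = c * complex.Re z.
Proof. by case: z => a b /=; rewrite mul0r subr0. Qed.

Lemma conj_realC (c : R) : (c%:C%C : C)^* = c%:C%C.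
Proof. exact: conjc_real. Qed.

Definition qform n (X : 'M[C]_n) (u v : 'rV[C]_n) : C := (u *m X *m adjmx v) 0 0.

Section QuadraticForm.
Variables (n : nat) (X : 'M[C]_n).

Lemma qformDl u u' v : qform X (u + u') v = qform X u v + qform X u' v.
Proof. by rewrite /qform !mulmxDl mxE. Qed.

Lemma qformDr u v v' : qform X u (v + v') = qform X u v + qform X u v'.
Proof. by rewrite /qform adjmxD mulmxDr mxE. Qed.

Lemma qformZl a u v : qform X (a *: u) v = a * qform X u v.
Proof. by rewrite /qform -!scalemxAl mxE. Qed.

Lemma qformZr a u v : qform X u (a *: v) = a^* * qform X u v.
Proof. by rewrite /qform adjmxZ -scalemxAr mxE. Qed.

Lemma qform_delta i j : qform X (delta_mx 0 i) (delta_mx 0 j) = X i j.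
Proof.
rewrite /qform -rowE.
have -> : adjmx (delta_mx 0 j : 'rV[C]_n) = delta_mx j 0.
  by apply/matrixP => a b; rewrite !mxE; case: eqP; case: eqP; rewrite ?conjC1 ?conjC0.
by rewrite -colE !mxE.
Qed.

End QuadraticForm.

Lemma psdmx_herm n (X : 'M[C]_n) : psdmx X -> adjmx X = X.
Proof.
move=> psdX; have qform_real u : (qform X u u)^* = qform X u u.
  exact/CrealP/ger0_real/psdX.
apply/matrixP => i j; rewrite !mxE.
set ei := delta_mx 0 i : 'rV[C]_n; set ej := delta_mx 0 j : 'rV[C]_n.
have := qform_real ei; have := qform_real ej; rewrite !qform_delta => Xjj Xii.
(* Polarization: reality of the form at [e_i + e_j] and at [e_i + 'i e_j] pins down [X i j]. *)
have polar1 := qform_real (ei + ej); have polar_i := qform_real (ei + 'i *: ej).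
rewrite !(qformDl, qformDr, qformZl, qformZr) !qform_delta in polar1 polar_i.
rewrite !(rmorphD, rmorphM) /= !conjCK conjCi Xii Xjj in polar1 polar_i.
move/eqP: polar1; rewrite -subr_eq0 => /eqP polar1.
move/eqP: polar_i; rewrite -subr_eq0 => /eqP polar_i.
apply/eqP; rewrite -subr_eq0; apply/eqP.
have two_i_neq0 : (2 * 'i : C) != 0 by rewrite mulf_neq0 ?neq0Ci ?pnatr_eq0.
have polar := congr2 (fun a b => 'i * a - b) polar1 polar_i.
rewrite /= mulr0 subr0 in polar.
by apply: (mulfI two_i_neq0); rewrite mulr0 -polar; ring.
Qed.

Lemma psdmx_castmx n n' (e : n = n') (X : 'M[C]_n) :
  psdmx (castmx (e, e) X) <-> psdmx X.
Proof. by case: n' / e; rewrite castmx_id. Qed.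

Definition rowC n (r : 'I_n -> R) : 'rV[C]_n := \row_i (r i)%:C%C.

(* The Hermitian operator with eigenvalues [r] on the orthonormal basis formed by the rows of [P]. *)
Definition udiag n (P : 'M[C]_n) (r : 'I_n -> R) : 'M[C]_n :=
  adjmx P *m diag_mx (rowC r) *m P.

Section UnitaryDiagonal.
Variables (n : nat) (P : 'M[C]_n).
Hypothesis P_unitary : P \is unitarymx.

Let mulmx_adj : P *m adjmx P = 1%:M.
Proof. by rewrite adjmxE; apply/unitarymxP. Qed.

Let mul_adjmx : adjmx P *m P = 1%:M.
Proof. by rewrite adjmxE -invmx_unitary // mulVmx // unitarymx_unit. Qed.

Lemma udiag_ext r s : r =1 s -> udiag P r = udiag P s.
Proof.
by move=> rs; rewrite /udiag; congr (_ *m diag_mx _ *m _); apply/matrixP => i j; rewrite !mxE rs.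
Qed.

Lemma mxtrace_udiag r : \tr (udiag P r) = (\sum_i r i)%:C%C.
Proof.
rewrite /udiag mxtrace_mulC mulmxA mulmx_adj mul1mx mxtrace_diag rmorph_sum.
by apply: eq_bigr => i _; rewrite mxE.
Qed.

Lemma udiag1 : udiag P (fun=> 1) = 1%:M.
Proof.
rewrite /udiag -[X in _ *m X *m _](_ : 1%:M = _) ?mulmx1 //.
by rewrite -diag_const_mx; congr diag_mx; apply/matrixP => i j; rewrite !mxE.
Qed.

Lemma udiagM r s : udiag P r *m udiag P s = udiag P (fun i => r i * s i).
Proof.
rewrite /udiag !mulmxA -[_ *m P *m adjmx P]mulmxA mulmx_adj mulmx1.
rewrite -[_ *m diag_mx _ *m diag_mx _]mulmxA mulmx_diag.
by congr (_ *m diag_mx _ *m _); apply/matrixP => i j; rewrite !mxE rmorphM.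
Qed.

Lemma udiagD r s : udiag P r + udiag P s = udiag P (fun i => r i + s i).
Proof.
rewrite /udiag -mulmxDl -mulmxDr -raddfD /=.
by congr (_ *m diag_mx _ *m _); apply/matrixP => i j; rewrite !mxE rmorphD.
Qed.

Lemma udiagN r : - udiag P r = udiag P (fun i => - r i).
Proof.
rewrite /udiag -mulNmx -mulmxN -raddfN /=.
by congr (_ *m diag_mx _ *m _); apply/matrixP => i j; rewrite !mxE rmorphN.
Qed.

Lemma udiagZ (c : R) r : c%:C%C *: udiag P r = udiag P (fun i => c * r i).
Proof.
rewrite /udiag scalemxAl scalemxAr -linearZ /=.
by congr (_ *m diag_mx _ *m _); apply/matrixP => i j; rewrite !mxE rmorphM.
Qed.

Lemma udiag_psd r : (forall i, 0 <= r i) -> psdmx (udiag P r).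
Proof.
move=> r_ge0 v; rewrite /udiag.
have -> : v *m (adjmx P *m diag_mx (rowC r) *m P) *m adjmx v =
          (v *m adjmx P) *m diag_mx (rowC r) *m adjmx (v *m adjmx P).
  by rewrite adjmxM adjmxK !mulmxA.
rewrite mul_mx_diag mxE; apply: sumr_ge0 => i _; rewrite !mxE mulrAC.
by apply: mulr_ge0; [exact: mul_conjC_ge0 | rewrite ler0c].
Qed.

Lemma mxtrace_mul_udiag (M : 'M[C]_n) r :
  \tr (M *m udiag P r) = \sum_i qform M (row i P) (row i P) * (r i)%:C%C.
Proof.
rewrite /udiag !mulmxA mxtrace_mulC !mulmxA mul_mx_diag /mxtrace.
apply: eq_bigr => i _; rewrite [LHS]mxE [rowC r _ _]mxE /qform; congr (_ * _).
rewrite !mxE; apply: eq_bigr => k _; rewrite !mxE; congr (_ * _).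
by apply: eq_bigr => j _; rewrite !mxE.
Qed.

Lemma char_poly_udiag r :
  char_poly (udiag P r) = \prod_i ('X - ((r i)%:C%C)%:P).
Proof.
have cpm : char_poly_mx (udiag P r) =
    map_mx polyC (adjmx P) *m char_poly_mx (diag_mx (rowC r)) *m map_mx polyC P.
  rewrite /char_poly_mx /udiag !map_mxM mulmxBr mulmxBl; congr (_ - _).
  by rewrite scalar_mxC -mulmxA -map_mxM mul_adjmx map_mx1 mulmx1.
rewrite /char_poly cpm !det_mulmx mulrC mulrA -det_mulmx -map_mxM mulmx_adj map_mx1 det1 mul1r.
rewrite -/(char_poly _) char_poly_trig ?diag_mx_is_trig //.
by apply: eq_bigr => i _; rewrite !mxE eqxx mulr1n.
Qed.

End UnitaryDiagonal.

Lemma udiag_spectrum_eq n (P Q : 'M[C]_n) r s (f : R -> R) :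
  P \is unitarymx -> Q \is unitarymx -> udiag P r = udiag Q s ->
  \sum_i f (r i) = \sum_i f (s i).
Proof.
move=> uP uQ PQ; have := char_poly_udiag uP r; rewrite PQ char_poly_udiag // => cp.
have /prod_XsubC_eq perm_sr :
    \prod_(x <- [seq (s i)%:C%C | i <- index_enum 'I_n]) ('X - x%:P) =
    \prod_(x <- [seq (r i)%:C%C | i <- index_enum 'I_n]) ('X - x%:P).
  by rewrite !big_map.
transitivity (\sum_(x <- [seq (r i)%:C%C | i <- index_enum 'I_n]) f (complex.Re x)).
  by rewrite big_map.
by rewrite -(perm_big _ perm_sr) big_map.
Qed.

Definition reigs n (X : 'M[C]_n) (i : 'I_n) : R := complex.Re (eigvals X 0 i).

Lemma herm_udiag n (H : 'M[C]_n) :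
  adjmx H = H -> H = udiag (spectralmx H) (reigs H).
Proof.
move=> H_herm; have P_unitary := spectral_unitarymx H.
have /orthomx_spectralP H_eq : H \is normalmx.
  by apply/normalmxP; rewrite -adjmxE H_herm.
have /hermitian_spectral_diag_real/mxOverP eig_real : H \is hermsymmx.
  by apply/is_hermitianmxP; rewrite expr0 scale1r -adjmxE H_herm.
have invP : invmx (spectralmx H) = adjmx (spectralmx H).
  by rewrite adjmxE invmx_unitary.
rewrite [LHS]H_eq invP; congr (_ *m diag_mx _ *m _).
by apply/matrixP => i j; rewrite !mxE ord1 RRe_real.
Qed.

Lemma mxtrace_herm n (H : 'M[C]_n) :
  adjmx H = H -> complex.Re (\tr H) = \sum_i reigs H i.
Proof.
by move=> /herm_udiag {1}->; rewrite mxtrace_udiag // spectral_unitarymx.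
Qed.

Lemma trnorm_herm n (H : 'M[C]_n) :
  adjmx H = H -> trnorm H = \sum_i `|reigs H i|.
Proof.
move=> H_herm; set G := adjmx H *m H.
have G_herm : adjmx G = G by rewrite /G adjmxM adjmxK.
have G_sqr : G = udiag (spectralmx H) (fun i => reigs H i * reigs H i).
  by rewrite /G H_herm {1 2}(herm_udiag H_herm) udiagM // spectral_unitarymx.
have := udiag_spectrum_eq Num.sqrt (spectral_unitarymx G) (spectral_unitarymx H)
  (etrans (esym (herm_udiag G_herm)) G_sqr).
rewrite /trnorm -/G => ->; apply: eq_bigr => i _.
by rewrite -expr2 sqrtr_sqr.
Qed.

Lemma norm_max0 (x : R) : `|x| = 2 * Num.max x 0 - x.
Proof.
by case: (lerP x 0) => x0; [rewrite ler0_norm | rewrite gtr0_norm]; lra.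
Qed.

Lemma max0_subN (x : R) : Num.max x 0 - Num.max (- x) 0 = x.
Proof.
by case: (lerP x 0) => x0; [rewrite max_l ?oppr_ge0 // | rewrite max_r ?oppr_le0 ?ltW //]; lra.
Qed.

Lemma trposE n (H : 'M[C]_n) : trpos H = \sum_i Num.max (reigs H i) 0.
Proof. by []. Qed.

Lemma trnorm_herm_trpos n (H : 'M[C]_n) :
  adjmx H = H -> trnorm H = 2 * trpos H - complex.Re (\tr H).
Proof.
move=> H_herm; rewrite trnorm_herm // mxtrace_herm // /trpos mulr_sumr -sumrB.
by apply: eq_bigr => i _; apply: norm_max0.
Qed.

Lemma trpos_ge0 n (H : 'M[C]_n) : 0 <= trpos H.
Proof. by apply: sumr_ge0 => i _; rewrite le_max lexx orbT. Qed.

Lemma trpos_attained n (H : 'M[C]_n) : adjmx H = H ->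
  exists Pi : 'M[C]_n, [/\ psdmx Pi, psdmx (1%:M - Pi) &
                          complex.Re (\tr (Pi *m H)) = trpos H].
Proof.
move=> H_herm; have P_unitary := spectral_unitarymx H.
pose pos i : R := if 0 < reigs H i then 1 else 0.
exists (udiag (spectralmx H) pos); split.
- by apply: udiag_psd => // i; rewrite /pos; case: ifP.
- rewrite -(udiag1 P_unitary) udiagN udiagD //.
  by apply: udiag_psd => // i; rewrite /pos; case: ifP; rewrite ?subrr ?subr0.
- rewrite [X in _ *m X](herm_udiag H_herm) udiagM // mxtrace_udiag //=.
  apply: eq_bigr => i _; rewrite /pos; case: ifP => [pos_i | /negbT].
    by rewrite mul1r max_l // ltW.
  by rewrite mul0r -leNgt => npos_i; rewrite max_r.
Qed.

Lemma trpos_eq0_mxtrace_le0 n (H M : 'M[C]_n) :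
  adjmx H = H -> trpos H = 0 -> psdmx M -> complex.Re (\tr (M *m H)) <= 0.
Proof.
move=> H_herm H0 psdM; have P_unitary := spectral_unitarymx H.
have max_ge0 i : 0 <= Num.max (reigs H i) 0 by rewrite le_max lexx orbT.
have eig_le0 i : reigs H i <= 0.
  have /(psumr_eq0P (fun i _ => max_ge0 i))/(_ i isT) := etrans (esym (trposE H)) H0.
  by move=> /= max0; rewrite -max0 le_max lexx.
rewrite (herm_udiag H_herm) mxtrace_mul_udiag // raddf_sum /=.
apply: sumr_le0 => i _; rewrite mulrC Re_realM mulr_le0_ge0 //.
by move: (psdM (row i (spectralmx H))); rewrite lecE => /andP[].
Qed.

Lemma herm_jordan n (D : 'M[C]_n) :
  adjmx D = D -> complex.Re (\tr D) = 0 -> 0 < trpos D ->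
  exists w1 w2 : 'M[C]_n,
    [/\ is_state w1, is_state w2 & D = (trpos D)%:C%C *: (w1 - w2)].
Proof.
move=> D_herm D_tr t_gt0; have P_unitary := spectral_unitarymx D.
set P := spectralmx D; set t := trpos D; set r := reigs D.
have t_neq0 : t != 0 by rewrite gt_eqF.
have sum_neg : \sum_i Num.max (- r i) 0 = t.
  transitivity (t - \sum_i r i); last by rewrite -mxtrace_herm // D_tr subr0.
  rewrite /t trposE -sumrB.
  by apply: eq_bigr => i _; have := max0_subN (r i); lra.
exists (udiag P (fun i => Num.max (r i) 0 / t)), (udiag P (fun i => Num.max (- r i) 0 / t)).
split.
- split; first by apply: udiag_psd => // i; rewrite divr_ge0 ?le_max ?lexx ?orbT ?ltW.
  by rewrite mxtrace_udiag // -mulr_suml mulfV.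
- split; first by apply: udiag_psd => // i; rewrite divr_ge0 ?le_max ?lexx ?orbT ?ltW.
  by rewrite mxtrace_udiag // -mulr_suml sum_neg mulfV.
- rewrite {1}(herm_udiag D_herm) -/P -/r udiagN udiagD // udiagZ //.
  apply: udiag_ext => i /=.
  by rewrite mulrDr mulrN !mulrA !(mulrC t) !mulfK // max0_subN.
Qed.

Lemma ldp_bound_ge0 (eps : R) : 0 <= eps -> 0 <= (expR eps - 1) / (expR eps + 1).
Proof. by move=> eps_ge0; have := expR_ge1Dx eps => e_ge; rewrite divr_ge0 //; lra. Qed.

Lemma binary_ldp_bound (e a b : R) : 0 <= e ->
  a - e * b <= 0 -> 1 - b - e * (1 - a) <= 0 -> a - b <= (e - 1) / (e + 1).
Proof. by move=> e_ge0 ab ba; rewrite ler_pdivlMr; nra. Qed.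

Lemma cast_mxtens_index0 n (e : 1 * n = n) (j : 'I_n) :
  cast_ord e (mxtens_index (ord0, j)) = j.
Proof. by apply: val_inj; rewrite /= mul0n. Qed.

Lemma ampl1 n m (A : 'M[C]_n -> 'M[C]_m) (X : 'M[C]_n) :
  ampl A (castmx (esym (mul1n n), esym (mul1n n)) X) =
  castmx (esym (mul1n m), esym (mul1n m)) (A X).
Proof.
apply/matrixP => p q; case: (mxtens_indexP p) => i a; case: (mxtens_indexP q) => j b.
rewrite (ord1 i) (ord1 j) !mxE castmxE !mxtens_indexK /= !cast_mxtens_index0.
by congr (A _ a b); apply/matrixP => a' b'; rewrite !mxE castmxE /= !cast_mxtens_index0.
Qed.

Section Channel.
Variables (n m : nat) (A : 'M[C]_n -> 'M[C]_m).
Hypothesis A_channel : is_channel A.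

Lemma channel0 : A 0 = 0.
Proof.
case: A_channel => A_lin _ _; have := A_lin 1 0 0; rewrite !scale1r !addr0 => A00.
by apply: (addrI (A 0)); rewrite addr0 -A00.
Qed.

Lemma channelZ a X : A (a *: X) = a *: A X.
Proof. by case: A_channel => A_lin _ _; rewrite -[a *: X]addr0 A_lin channel0 addr0. Qed.

Lemma channelB X Y : A (X - Y) = A X - A Y.
Proof. by case: A_channel => A_lin _ _; rewrite addrC -scaleN1r A_lin scaleN1r addrC. Qed.

Lemma channel_psd X : psdmx X -> psdmx (A X).
Proof.
case: A_channel => _ A_cp _ psdX; apply/(psdmx_castmx (esym (mul1n m))).
by rewrite -ampl1; apply: A_cp; apply/psdmx_castmx.
Qed.

Lemma channel_state rho : is_state rho -> is_state (A rho).
Proof.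
by case: A_channel => _ _ A_tr [psd_rho tr_rho]; split; [exact: channel_psd | rewrite A_tr].
Qed.

Section LocalDifferentialPrivacy.
Variable eps : R.
Hypotheses (eps_ge0 : 0 <= eps) (A_LDP : is_LDP eps A).
Local Notation e := (expR eps).

Lemma ldp_mxtrace_diff_le w1 w2 (Pi : 'M[C]_m) :
  is_state w1 -> is_state w2 -> psdmx Pi -> psdmx (1%:M - Pi) ->
  complex.Re (\tr (Pi *m (A w1 - A w2))) <= (e - 1) / (e + 1).
Proof.
move=> w1_state w2_state psdPi psdPi'.
have [[psdA1 trA1] [psdA2 trA2]] := (channel_state w1_state, channel_state w2_state).
have herm_diff (X Y : 'M[C]_m) : psdmx X -> psdmx Y -> adjmx (X - e%:C%C *: Y) = X - e%:C%C *: Y.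
  by move=> psdX psdY; rewrite adjmxB adjmxZ conj_realC !psdmx_herm.
have le1 := trpos_eq0_mxtrace_le0 (herm_diff _ _ psdA1 psdA2) (A_LDP w1_state w2_state) psdPi.
have le2 := trpos_eq0_mxtrace_le0 (herm_diff _ _ psdA2 psdA1) (A_LDP w2_state w1_state) psdPi'.
rewrite !(mulmxBr, mulmxBl, mul1mx, raddfB) /= -!scalemxAr !mxtraceZ !Re_realM trA1 trA2 in le1 le2.
rewrite mulmxBr !raddfB /=; apply: (binary_ldp_bound (expR_ge0 eps) le1).
by move: le2 => /=; lra.
Qed.

Lemma ldp_trnorm_ratio_le rho sigma : is_state rho -> is_state sigma ->
  trnorm (A rho - A sigma) / trnorm (rho - sigma) <= (e - 1) / (e + 1).
Proof.
move=> [psd_rho tr_rho] [psd_sigma tr_sigma].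
set D := rho - sigma.
have D_herm : adjmx D = D by rewrite adjmxB !psdmx_herm.
have D_tr : complex.Re (\tr D) = 0 by rewrite raddfB /= tr_rho tr_sigma subrr.
have AD : A rho - A sigma = A D by rewrite channelB.
have AD_herm : adjmx (A D) = A D by rewrite -AD adjmxB !psdmx_herm //; apply: channel_psd.
have AD_tr : complex.Re (\tr (A D)) = 0 by case: A_channel => _ _ ->.
rewrite AD !trnorm_herm_trpos // D_tr AD_tr !subr0.
(* [rho != sigma] is not assumed: for [trpos D = 0] the ratio is [x / 0 = 0]. *)
have [D0 | D_neq0] := eqVneq (trpos D) 0.
  by rewrite D0 mulr0 invr0 mulr0 ldp_bound_ge0.
have t_gt0 : 0 < trpos D by rewrite lt_def D_neq0 trpos_ge0.
have [w1 [w2 [w1_state w2_state D_eq]]] := herm_jordan D_herm D_tr t_gt0.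
have [Pi [psdPi psdPi' <-]] := trpos_attained AD_herm.
set t := trpos D in t_gt0 D_eq *.
rewrite D_eq channelZ -scalemxAr mxtraceZ Re_realM channelB.
have -> : 2 * (t * complex.Re (\tr (Pi *m (A w1 - A w2)))) / (2 * t) =
          complex.Re (\tr (Pi *m (A w1 - A w2))) by field; rewrite gt_eqF.
exact: ldp_mxtrace_diff_le.
Qed.

End LocalDifferentialPrivacy.
End Channel.
End QuantumChannels.

Theorem mainTheorem12 (R : realType) (n m : nat) (eps : R)
    (A : 'M[R[i]]_n -> 'M[R[i]]_m) :
  0 <= eps -> is_channel A -> is_LDP eps A ->
  eta_tr A <= (expR eps - 1) / (expR eps + 1).
Proof.
move=> eps_ge0 A_channel A_LDP; rewrite /eta_tr; set S := (X in sup X).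
have [[r Sr] | /nonemptyPn ->] := pselect (S !=set0)%classic; last first.
  by rewrite sup0 ldp_bound_ge0.
apply: ge_sup; first by exists r.
move=> _ [rho [sigma [rho_state sigma_state _ ->]]].
exact: (ldp_trnorm_ratio_le A_channel eps_ge0 A_LDP rho_state sigma_state).
Qed.
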